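(* Let $\mathcal S$ be an $\epsilon$-sample of $\mathcal C$ with $0<\epsilon\le1$. Let $a,b\in\mathcal S$ with $a\to b$ and let $p\in(a,b)$. Then $d_p=\min\{d(p,a),d(p,b)\}$, and $d_p<d(p,s)$ for all $s\in\mathcal S\setminus\{a,b\}$.
   Context: $\mathcal C\subset\mathbb R^d$ ($d\ge2$) is a finite union of pairwise disjoint closed curves (images of injective continuous maps $S^1\to\mathbb R^d$); $\mathcal S\subset\mathcal C$ is finite. The medial axis $\mathcal M$ is the set of points with no unique closest point in $\mathcal C$, $\mathrm{lfs}(p)=d(p,\mathcal M)$, and $\mathcal S$ is an $\epsilon$-sample if $d(p,\mathcal S)<\epsilon\,\mathrm{lfs}(p)$ for all $p\in\mathcal C$. For $p\in\mathcal C$, $d_p=d(p,\mathcal S)$. For sample points, $a\to b$ means: for a chosen orientation of the component of $\mathcal C$ containing $a,b$, moving from $a$ along the orientation, the next sample point met is $b$. With this orientation, $(a,b)$ denotes the open arc from $a$ to $b$ along the orientation. *)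

From HB Require Import structures.
From mathcomp Require Import all_boot all_order all_algebra.
From mathcomp Require Import all_classical all_reals all_analysis.
Set Implicit Arguments. Unset Strict Implicit. Unset Printing Implicit Defensive.
Import Order.TTheory GRing.Theory Num.Theory.
Import numFieldNormedType.Exports.
Local Open Scope classical_set_scope.
Local Open Scope ring_scope.

Definition eucl_dist (R : realType) (d : nat) (x y : 'rV[R]_d) : R :=
  Num.sqrt (\sum_(i < d) (x ord0 i - y ord0 i) ^+ 2).

Definition dist_to (R : realType) (d : nat) (x : 'rV[R]_d) (A : set 'rV[R]_d) : R :=
  inf [set eucl_dist x y | y in A].

Definition closest (R : realType) (d : nat) (C : set 'rV[R]_d) (x c : 'rV[R]_d) : Prop :=
  C c /\ forall y, C y -> eucl_dist x c <= eucl_dist x y.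

Definition medial_axis (R : realType) (d : nat) (C : set 'rV[R]_d) : set 'rV[R]_d :=
  [set x | ~ (exists! c, closest C x c)].

(* local feature size lfs(p) = d(p, M), extended-real valued (+oo if M empty) *)
Definition lfs (R : realType) (d : nat) (C : set 'rV[R]_d) (p : 'rV[R]_d) : \bar R :=
  ereal_inf [set (eucl_dist p m)%:E | m in medial_axis C].

Definition eps_sample (R : realType) (d : nat) (C S : set 'rV[R]_d) (eps : R) : Prop :=
  forall p, C p -> ((dist_to p S)%:E < eps%:E * lfs C p)%E.

(* a closed curve = image of an injective continuous map S^1 -> R^d, given as a
   continuous 1-periodic map R -> R^d that is injective on [0,1).
   The direction of the parametrization is the chosen orientation. *)
Definition closed_curve (R : realType) (d : nat) (g : R -> 'rV[R]_d) : Prop :=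
  continuous g /\ (forall t, g (t + 1) = g t) /\
  (forall s t, 0 <= s < 1 -> 0 <= t < 1 -> g s = g t -> s = t).


(* Cut the family of curves C at a and b into the arc A = gam_k[ta, tb] and the
   rest D (the complementary arc of gam_k and all other curves).  Both pieces
   are nonempty compact sets, so every point has a closest point in each, and
   A and D meet only in {a, b}.  The core is a separation argument: for p in
   A \ D and a sample s in D \ {a, b} with |ps| < lfs(p), the intermediate value
   theorem yields a point x on the segment [p, s] equidistant from A and D;
   since |px| <= |ps| < lfs(p), x is off the medial axis, so its unique closest
   point lies in A and D, i.e. is a or b, and is strictly closer to p than s.
   Samples with |ps| >= lfs(p) are beaten by d_p, which is < lfs(p) because the
   sample is an eps-sample with eps <= 1.  The file develops, in order: the
   Euclidean distance, distances to sets with closest points, the separation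
   argument, periodic parametrizations and arcs, the decomposition of the curve
   family, and finally the theorem. *)

From HB Require Import structures.
From mathcomp Require Import all_boot all_order all_algebra.
From mathcomp Require Import all_classical all_reals all_analysis.
From mathcomp Require Import ring lra zify.
Import Order.TTheory GRing.Theory Num.Theory.
Import numFieldNormedType.Exports.
Local Open Scope classical_set_scope.
Local Open Scope ring_scope.
Set Implicit Arguments. Unset Strict Implicit.

Section EuclideanDistance.
Variables (R : realType) (d : nat).
Local Notation ed := (@eucl_dist R d).
Implicit Types x y z : 'rV[R]_d.

Lemma ed_ge0 x y : 0 <= ed x y.
Proof. exact: sqrtr_ge0. Qed.

Lemma ed_sym x y : ed x y = ed y x.
Proof.
rewrite /eucl_dist; congr Num.sqrt; apply: eq_bigr => i _.
by rewrite -opprB sqrrN.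
Qed.

Lemma ed_xx x : ed x x = 0.
Proof. by rewrite /eucl_dist big1 ?sqrtr0 // => i _; rewrite subrr expr0n. Qed.

Lemma ed_eq0 x y : ed x y = 0 -> x = y.
Proof.
rewrite /eucl_dist => /eqP; rewrite sqrtr_eq0 => sum_le0.
have sum0 : \sum_(i < d) (x ord0 i - y ord0 i) ^+ 2 = 0.
  by apply/eqP; rewrite eq_le sum_le0 sumr_ge0 // => i _; exact: sqr_ge0.
apply/rowP => i; apply/eqP; rewrite -subr_eq0 -sqrf_eq0; apply/eqP.
exact: (psumr_eq0P (fun j _ => sqr_ge0 (x ord0 j - y ord0 j)) sum0).
Qed.

(* Cauchy-Schwarz for finite sums, via the Lagrange identity
   sum_ij (a_i b_j - a_j b_i)^2 = 2 (sum a^2)(sum b^2) - 2 (sum ab)^2 >= 0. *)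
Lemma cauchy_schwarz (a b : 'I_d -> R) :
  (\sum_i a i * b i) ^+ 2 <= (\sum_i a i ^+ 2) * (\sum_i b i ^+ 2).
Proof.
have lagrange_ge0 : 0 <= \sum_i \sum_j (a i * b j - a j * b i) ^+ 2.
  by apply: sumr_ge0 => i _; apply: sumr_ge0 => j _; exact: sqr_ge0.
have sqrE : (\sum_i a i * b i) ^+ 2 = \sum_i \sum_j (a i * b i) * (a j * b j).
  by rewrite expr2 mulr_suml; apply: eq_bigr => i _; rewrite mulr_sumr.
have prodE : (\sum_i a i ^+ 2) * (\sum_i b i ^+ 2) =
    \sum_i \sum_j a i ^+ 2 * b j ^+ 2.
  by rewrite mulr_suml; apply: eq_bigr => i _; rewrite mulr_sumr.
have prod_sym : \sum_i \sum_j a i ^+ 2 * b j ^+ 2 =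
    \sum_i \sum_j a j ^+ 2 * b i ^+ 2 by rewrite exchange_big.
have lagrangeE : \sum_i \sum_j (a i * b j - a j * b i) ^+ 2 =
    \sum_i \sum_j a i ^+ 2 * b j ^+ 2 + \sum_i \sum_j a j ^+ 2 * b i ^+ 2
    - 2%:R * \sum_i \sum_j (a i * b i) * (a j * b j).
  rewrite -big_split /= mulr_sumr -sumrN -big_split /=; apply: eq_bigr => i _.
  rewrite -big_split /= mulr_sumr -sumrN -big_split /=; apply: eq_bigr => j _.
  by rewrite sqrrB !exprMn; ring.
by rewrite sqrE prodE; move: lagrange_ge0; rewrite lagrangeE -prod_sym; lra.
Qed.

Lemma ed_triangle x y z : ed x z <= ed x y + ed y z.
Proof.
rewrite /eucl_dist.
set a := fun i => x ord0 i - y ord0 i; set b := fun i => y ord0 i - z ord0 i.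
have -> : \sum_(i < d) (x ord0 i - z ord0 i) ^+ 2 = \sum_i (a i + b i) ^+ 2.
  by apply: eq_bigr => i _; rewrite /a /b; congr (_ ^+ 2); ring.
set A := \sum_i a i ^+ 2; set B := \sum_i b i ^+ 2.
have A0 : 0 <= A by apply: sumr_ge0 => i _; exact: sqr_ge0.
have B0 : 0 <= B by apply: sumr_ge0 => i _; exact: sqr_ge0.
have sumE : \sum_i (a i + b i) ^+ 2 = A + 2%:R * (\sum_i a i * b i) + B.
  by rewrite /A /B mulr_sumr -!big_split /=; apply: eq_bigr => i _; ring.
have cs : \sum_i a i * b i <= Num.sqrt A * Num.sqrt B.
  rewrite -sqrtrM // (le_trans (ler_norm _)) // -sqrtr_sqr ler_sqrt.
    exact: cauchy_schwarz.
  exact: mulr_ge0.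
have rhs0 : 0 <= Num.sqrt A + Num.sqrt B by rewrite addr_ge0 ?sqrtr_ge0.
rewrite -(ger0_norm rhs0) -sqrtr_sqr ler_sqrt; last exact: sqr_ge0.
by rewrite sumE sqrrD !sqr_sqrtr //; lra.
Qed.

Lemma ed_scale x y (u v : 'rV[R]_d) (c : R) :
  (forall i, x ord0 i - y ord0 i = c * (u ord0 i - v ord0 i)) ->
  ed x y = `|c| * ed u v.
Proof.
move=> diffE; rewrite /eucl_dist.
have -> : \sum_(i < d) (x ord0 i - y ord0 i) ^+ 2 =
    c ^+ 2 * \sum_(i < d) (u ord0 i - v ord0 i) ^+ 2.
  by rewrite mulr_sumr; apply: eq_bigr => i _; rewrite diffE exprMn.
by rewrite sqrtrM ?sqr_ge0 // sqrtr_sqr.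
Qed.

Lemma ed_continuous y : continuous (ed y).
Proof.
have coordC i : continuous (fun z : 'rV[R]_d => y ord0 i - z ord0 i).
  by move=> z; apply: continuousB; [exact: cst_continuous | exact: coord_continuous].
have sumC (r : seq 'I_d) :
    continuous (fun z : 'rV[R]_d => \sum_(i <- r) (y ord0 i - z ord0 i) ^+ 2).
  elim: r => [|i r IH] z.
    by under eq_fun do rewrite big_nil; exact: cst_continuous.
  under eq_fun do rewrite big_cons.
  apply: continuousD (IH z).
  exact: continuousM (coordC i z) (coordC i z).
move=> x; apply: (continuous_comp (sumC _ x)); exact: sqrt_continuous.
Qed.

End EuclideanDistance.

Section DistanceToSet.
Variables (R : realType) (d : nat).
Local Notation ed := (@eucl_dist R d).
Implicit Types (E : set 'rV[R]_d) (x y z c : 'rV[R]_d).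

Definition has_closest E := forall y, exists c, closest E y c.

Lemma compact_has_closest E : compact E -> E !=set0 -> has_closest E.
Proof.
move=> cE E0 y.
have [c /set_mem Ec minc] :=
  compact_EVT_min E0 cE (continuous_subspaceT (@ed_continuous R d y)).
by exists c; split => // z Ez; apply: minc; exact: mem_set.
Qed.

Lemma dist_to_le E y z : E z -> dist_to y E <= ed y z.
Proof.
move=> Ez; apply: ge_inf; last by exists z.
by exists 0 => _ [w _ <-]; exact: ed_ge0.
Qed.

Lemma dist_to_ge0 E y : E !=set0 -> 0 <= dist_to y E.
Proof.
move=> [z Ez]; apply: lb_le_inf; first by exists (ed y z), z.
by move=> _ [w _ <-]; exact: ed_ge0.
Qed.

Lemma dist_closest E y c : closest E y c -> dist_to y E = ed y c.
Proof.
move=> [Ec minc]; apply/eqP; rewrite eq_le dist_to_le //=.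
by apply: lb_le_inf; [exists (ed y c), c | move=> _ [z Ez <-]; exact: minc].
Qed.

Lemma dist_to_eq0 E y : E y -> dist_to y E = 0.
Proof.
move=> Ey; apply/eqP; rewrite eq_le dist_to_ge0 ?andbT; last by exists y.
by rewrite -(ed_xx y) dist_to_le.
Qed.

Section Closest.
Variables (E : set 'rV[R]_d) (hE : has_closest E).

Lemma dist_to_lipschitz y z : `|dist_to y E - dist_to z E| <= ed y z.
Proof.
suff le_ed x w : dist_to x E <= ed x w + dist_to w E.
  by rewrite ler_norml; have := le_ed y z; have := le_ed z y; rewrite (ed_sym z y); lra.
have [cw hw] := hE w; rewrite (dist_closest hw).
apply: le_trans (ed_triangle x w cw); exact: dist_to_le (hw.1).
Qed.

Lemma dist_to_gt0 y : ~ E y -> 0 < dist_to y E.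
Proof.
move=> nEy; have [c hc] := hE y; rewrite (dist_closest hc) lt_neqAle ed_ge0 andbT.
by apply/eqP => /esym/ed_eq0 yc; apply: nEy; rewrite yc; exact: hc.1.
Qed.

End Closest.
End DistanceToSet.

Lemma lipschitz_continuous (R : realType) (f : R -> R) (K : R) :
  (forall x y, `|f x - f y| <= K * `|x - y|) -> continuous f.
Proof.
move=> lipf x; apply/cvgrPdist_lt => e e0.
have K0 : 0 <= K.
  have := lipf x (x + 1); rewrite opprD addrA subrr sub0r normrN normr1 mulr1.
  exact: le_trans (normr_ge0 _).
have K1 : 0 < K + 1 by lra.
near=> y; apply: le_lt_trans (lipf x y) _.
have : `|x - y| < e / (K + 1).
  near: y; apply: (@cvgr_dist_lt _ R _ _ _ id x); [exact: cvg_id | by rewrite divr_gt0].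
move=> xy; apply: (@le_lt_trans _ _ (K * (e / (K + 1)))).
  by rewrite ler_wpM2l // ltW.
by rewrite mulrA ltr_pdivrMr //; nra.
Unshelve. all: by end_near.
Qed.

Definition seg (R : realType) (d : nat) (p s : 'rV[R]_d) (l : R) : 'rV[R]_d :=
  p + l *: (s - p).

Section Segment.
Variables (R : realType) (d : nat) (p s : 'rV[R]_d).

Lemma seg0 : seg p s 0 = p.
Proof. by rewrite /seg scale0r addr0. Qed.

Lemma seg1 : seg p s 1 = s.
Proof. by rewrite /seg scale1r addrC subrK. Qed.

Lemma seg_dist l l' : eucl_dist (seg p s l) (seg p s l') = `|l - l'| * eucl_dist p s.
Proof. by rewrite (ed_sym p) (@ed_scale _ _ _ _ s p (l - l')) // => i; rewrite !mxE; ring. Qed.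

Lemma seg_dist_split l : 0 <= l <= 1 ->
  eucl_dist p (seg p s l) = l * eucl_dist p s /\
  eucl_dist (seg p s l) s = (1 - l) * eucl_dist p s.
Proof.
move=> /andP[l0 l1].
split.
  by rewrite -{1}seg0 seg_dist sub0r normrN ger0_norm.
by rewrite -{2}seg1 seg_dist distrC ger0_norm // subr_ge0.
Qed.

End Segment.

Lemma medial_axis_lfs (R : realType) (d : nat) (C : set 'rV[R]_d) p x :
  medial_axis C x -> (lfs C p <= (eucl_dist p x)%:E)%E.
Proof. by move=> Mx; apply: ereal_inf_lbound; exists x. Qed.

Lemma unique_closest_lt (R : realType) (d : nat) (C : set 'rV[R]_d) x c s :
  (exists! c, closest C x c) -> closest C x c -> C s -> s <> c ->
  eucl_dist x c < eucl_dist x s.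
Proof.
move=> [w [_ uniqw]] clc Cs sc; rewrite lt_neqAle clc.2 // andbT.
apply/eqP => xcs; apply: sc; rewrite -(uniqw _ clc); apply/esym/uniqw.
by split=> // z Cz; rewrite -xcs; exact: clc.2.
Qed.

(* Walking from p in A \ D to s in D, some
   point x is equidistant from A and D; if x is off the medial axis its unique
   closest point lies in A and D, hence is a or b, and is closer to p than s. *)
Section Separation.
Variables (R : realType) (d : nat) (C A D : set 'rV[R]_d) (a b : 'rV[R]_d).
Hypotheses (hCAD : C = A `|` D) (hA : has_closest A) (hD : has_closest D).
Hypothesis hAD : forall z, A z -> D z -> z = a \/ z = b.
Local Notation ed := (@eucl_dist R d).

(* Intermediate value theorem for dist(., A) - dist(., D) along a segment. *)
Lemma equidistant_on_segment p s : A p -> ~ D p -> D s -> ~ A s ->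
  exists2 l, 0 <= l <= 1 & dist_to (seg p s l) A = dist_to (seg p s l) D.
Proof.
move=> Ap nDp Ds nAs.
pose h l := dist_to (seg p s l) A - dist_to (seg p s l) D.
have hC : continuous h.
  apply: (@lipschitz_continuous _ h (2 * ed p s)) => l l'.
  have := dist_to_lipschitz hA (seg p s l) (seg p s l').
  have := dist_to_lipschitz hD (seg p s l) (seg p s l').
  rewrite seg_dist /h !ler_norml => /andP[? ?] /andP[? ?].
  have : 0 <= `|l - l'| * ed p s by rewrite mulr_ge0 ?ed_ge0.
  by move=> ?; apply/andP; split; nra.
have h0 : h 0 < 0.
  by rewrite /h seg0 (dist_to_eq0 Ap) sub0r oppr_lt0 dist_to_gt0.
have h1 : 0 < h 1 by rewrite /h seg1 (dist_to_eq0 Ds) subr0 dist_to_gt0.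
have [l l01 hl0] : exists2 l, l \in `[0, 1] & h l = 0.
  apply: IVT => //; first exact: continuous_subspaceT.
  by rewrite ge_min le_max (ltW h0) (ltW h1) orbT.
exists l; first by move: l01; rewrite in_itv.
by apply/eqP; rewrite -subr_eq0 -/(h l) hl0.
Qed.

Lemma equidistant_closest x : dist_to x A = dist_to x D ->
  exists cA cD, [/\ A cA, D cD, closest C x cA & closest C x cD].
Proof.
move=> eqAD; have [cA hcA] := hA x; have [cD hcD] := hD x.
have edE : ed x cA = ed x cD by rewrite -(dist_closest hcA) -(dist_closest hcD).
exists cA, cD; split; [exact: hcA.1 | exact: hcD.1 | |]; rewrite hCAD.
- split; first by left; exact: hcA.1.
  by move=> z [/hcA.2 //|/hcD.2]; rewrite edE.
- split; first by right; exact: hcD.1.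
  by move=> z [/hcA.2|/hcD.2 //]; rewrite edE.
Qed.

Lemma separation p s : A p -> ~ D p -> D s -> s <> a -> s <> b ->
  ((ed p s)%:E < lfs C p)%E -> Num.min (ed p a) (ed p b) < ed p s.
Proof.
move=> Ap nDp Ds sa sb s_lfs.
have nAs : ~ A s by move=> /hAD /(_ Ds) [].
rewrite ltNge; apply/negP => s_le.
have [l l01 eqAD] := equidistant_on_segment Ap nDp Ds nAs.
have [px xs] := seg_dist_split p s l01.
set x := seg p s l in eqAD px xs *.
have uniq_x : exists! c, closest C x c.
  apply: contrapT => /(medial_axis_lfs p); rewrite px => lfs_le.
  move: s_lfs; rewrite ltNge => /negP; apply; apply: le_trans lfs_le _.
  by rewrite lee_fin ler_piMl ?ed_ge0 //; case/andP: l01.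
have [cA [cD [AcA DcD clA clD]]] := equidistant_closest eqAD.
have eq_cAD : cA = cD.
  by case: uniq_x => w [_ uniqw]; rewrite -(uniqw _ clA) (uniqw _ clD).
have cab : cA = a \/ cA = b by apply: hAD; rewrite // eq_cAD.
have xcA_lt : ed x cA < ed x s.
  apply: unique_closest_lt uniq_x clA _ _; first by rewrite hCAD; right.
  by case: cab => -> ?; [apply: sa | apply: sb].
have pcA_le := ed_triangle p x cA.
have min_le : Num.min (ed p a) (ed p b) <= ed p cA.
  by case: cab => ->; rewrite ge_min lexx ?orbT.
move: xcA_lt pcA_le; rewrite px xs; lra.
Qed.

End Separation.

Section Periodic.
Variables (R : realType) (d : nat) (g : R -> 'rV[R]_d).
Hypothesis gper : forall t, g (t + 1) = g t.

Lemma per_int t (n : int) : g (t + n%:~R) = g t.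
Proof.
have per_nat u (j : nat) : g (u + j%:R) = g u.
  by elim: j => [|j IH]; rewrite ?addr0 // -natr1 addrA gper.
case: n => j; first by rewrite -pmulrn per_nat.
by rewrite -(per_nat _ j.+1) NegzE mulrNz -addrA addNr addr0.
Qed.

Lemma per_reduce u c : exists2 v, c <= v < c + 1 & g u = g v.
Proof.
exists (u - (Num.floor (u - c))%:~R); last by rewrite -intrN per_int.
by have := floor_itv (u - c); rewrite intrD => /andP[? ?]; apply/andP; split; lra.
Qed.

Hypothesis ginj : forall s t, 0 <= s < 1 -> 0 <= t < 1 -> g s = g t -> s = t.

Lemma per_inj c s t : c <= s < c + 1 -> c <= t < c + 1 -> g s = g t -> s = t.
Proof.
move=> /andP[s1 s2] /andP[t1 t2] gst.
have frac01 (u : R) : 0 <= u - (Num.floor u)%:~R < 1.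
  by have := floor_itv u; rewrite intrD => /andP[? ?]; apply/andP; split; lra.
have fracE : s - (Num.floor s)%:~R = t - (Num.floor t)%:~R.
  by apply: ginj; rewrite ?frac01 // -!intrN !per_int.
have stE : s - t = (Num.floor s - Num.floor t)%:~R by rewrite intrB; lra.
have : (Num.floor s - Num.floor t)%:~R < 1 :> R by rewrite -stE; lra.
have : -1 < (Num.floor s - Num.floor t)%:~R :> R by rewrite -stE; lra.
rewrite -[-1 : R]/((-1)%:~R) -[1 : R]/(1%:~R) !ltr_int => ? ?.
have floorE : Num.floor s - Num.floor t = 0 by lia.
by move: stE => /eqP; rewrite floorE subr_eq0 => /eqP.
Qed.

End Periodic.

Definition arc (R : realType) (d : nat) (g : R -> 'rV[R]_d) (al be : R) :
  set 'rV[R]_d := g @` `[al, be].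

Lemma arc_compact (R : realType) (d : nat) (g : R -> 'rV[R]_d) al be :
  continuous g -> compact (arc g al be).
Proof. by move=> gC; apply: continuous_compact; [exact: continuous_subspaceT | exact: segment_compact]. Qed.

Lemma arc_has_closest (R : realType) (d : nat) (g : R -> 'rV[R]_d) al be :
  continuous g -> al <= be -> has_closest (arc g al be).
Proof.
move=> gC albe; apply: compact_has_closest; first exact: arc_compact.
by exists (g al), al => //=; rewrite in_itv /= lexx.
Qed.

Lemma arc_endpoints (R : realType) (d : nat) (g : R -> 'rV[R]_d) al be
    (P : set 'rV[R]_d) :
  (forall u, al < u < be -> ~ P (g u)) ->
  forall z, P z -> arc g al be z -> z = g al \/ z = g be.
Proof.
move=> avoid z Pz [u + gz]; subst z; rewrite /= in_itv /= => /andP[u1 u2].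
have [<-|ne1] := eqVneq al u; first by left.
have [->|ne2] := eqVneq u be; first by right.
by exfalso; apply: (avoid u _ Pz); rewrite !lt_neqAle ne1 ne2 u1 u2.
Qed.

Lemma bigcup_compact_fin (T : topologicalType) (I : finType) (P : pred I)
    (F : I -> set T) :
  (forall i, P i -> compact (F i)) -> compact (\bigcup_(i in [set i | P i]) F i).
Proof.
move=> FC; have -> : [set i | P i] = [set i | (i \in enum I) && P i].
  by apply/seteqP; split => i /=; rewrite mem_enum.
by rewrite bigcup_seq_cond; exact: bigsetU_compact.
Qed.

Section CurveFamily.
Variables (R : realType) (d m : nat) (gam : 'I_m -> R -> 'rV[R]_d).
Hypothesis hcurve : forall k, closed_curve (gam k).
Hypothesis hdisj : forall k l, k != l -> forall s t, gam k s <> gam l t.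
Variables (k : 'I_m) (ta tb : R).

Definition arc_complement : set 'rV[R]_d :=
  arc (gam k) tb (ta + 1) `|` \bigcup_(l in [set l | l != k]) arc (gam l) 0 1.

Lemma curves_split :
  \bigcup_(l in [set: 'I_m]) range (gam l) = arc (gam k) ta tb `|` arc_complement.
Proof.
apply/seteqP; split => [_ [l _ [u _ <-]]|].
  have [lk|lk] := eqVneq l k.
    rewrite lk; have [v /andP[v1 v2] ->] := per_reduce (hcurve k).2.1 u ta.
    have [vb|bv] := leP v tb; first by left; exists v => //=; rewrite in_itv /= v1.
    by right; left; exists v => //=; rewrite in_itv /= !ltW.
  have [v /andP[v1 v2] ->] := per_reduce (hcurve l).2.1 u 0.
  by right; right; exists l => //; exists v => //=; rewrite in_itv /= v1 ltW // -[1]add0r.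
move=> _ [|[|[l _]]] [u _ <-]; by [exists k => //; exists u | exists l => //; exists u].
Qed.

Lemma arcs_meet z : arc (gam k) ta tb z -> arc_complement z ->
  z = gam k ta \/ z = gam k tb.
Proof.
move=> [u + <-]; rewrite /= in_itv /= => /andP[u1 u2].
case=> [[v]|[l /= lk [w _ gw]]]; last by case: (hdisj lk gw).
rewrite /= in_itv /= => /andP[v1 v2] gv.
have [<-|ne1] := eqVneq ta u; first by left.
have [->|ne2] := eqVneq u tb; first by right.
have [vE|ne3] := eqVneq v (ta + 1); first by left; rewrite -gv vE (hcurve k).2.1.
have [vE|ne4] := eqVneq v tb; first by right; rewrite -gv vE.
have [ut bv] : u < tb /\ tb < v by rewrite !lt_neqAle ne2 u2 eq_sym ne4 v1.
have vt : v < ta + 1 by rewrite lt_neqAle ne3 v2.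
have vu : v = u.
  by apply: (per_inj (hcurve k).2.1 (hcurve k).2.2 (c := ta) _ _ gv);
    apply/andP; split; lra.
by exfalso; lra.
Qed.

Lemma arc_complement_has_closest : tb <= ta + 1 -> has_closest arc_complement.
Proof.
move=> tba; apply: compact_has_closest.
  apply: compactU; first exact: arc_compact (hcurve k).1.
  by apply: bigcup_compact_fin => l _; exact: arc_compact (hcurve l).1.
by exists (gam k tb); left; exists tb => //=; rewrite in_itv /= lexx.
Qed.

End CurveFamily.

(* For an eps-sample with eps <= 1, the nearest sample to p is strictly within
   lfs(p): there is a radius L > d_p below which lfs(p) is never reached. *)
Lemma sample_radius (R : realType) (d : nat) (C S : set 'rV[R]_d) (eps : R) p :
  S !=set0 -> 0 < eps -> eps <= 1 -> eps_sample C S eps -> C p ->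
  exists L, dist_to p S < L /\ forall r, r < L -> (r%:E < lfs C p)%E.
Proof.
move=> S0 eps0 eps1 hsample Cp; have dp0 := dist_to_ge0 p S0.
move: (hsample p Cp); case: (lfs C p) => [r| |].
- rewrite -EFinM lte_fin => dp_lt; exists r; split; last by move=> r' ?; rewrite lte_fin.
  have r0 : 0 < r by rewrite -(pmulr_rgt0 _ eps0); lra.
  nra.
- by move=> _; exists (dist_to p S + 1); split => [|r' _]; [lra | exact: ltry].
- by rewrite mulrNy gtr0_sg // mul1e.
Qed.

Lemma nearest_of_two (R : realType) (d : nat) (S : set 'rV[R]_d) (p a b : 'rV[R]_d)
    (L : R) :
  S a -> S b -> dist_to p S < L ->
  (forall s, S s -> s <> a -> s <> b -> eucl_dist p s < L ->
    Num.min (eucl_dist p a) (eucl_dist p b) < eucl_dist p s) ->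
  dist_to p S = Num.min (eucl_dist p a) (eucl_dist p b) /\
  (forall s, S s -> s <> a -> s <> b -> dist_to p S < eucl_dist p s).
Proof.
move=> Sa Sb dpL farther.
set m0 := Num.min _ _.
have dp_m0 : dist_to p S <= m0 by rewrite le_min !dist_to_le.
split.
  apply/eqP; rewrite eq_le dp_m0 leNgt; apply/negP => dp_lt.
  have S0 : [set eucl_dist p y | y in S] !=set0 by exists (eucl_dist p a), a.
  have dp_lt' : dist_to p S < Num.min m0 L by rewrite lt_min dp_lt dpL.
  have [_ [y Sy <-]] := inf_lt S0 dp_lt'.
  rewrite lt_min => /andP[y_m0 y_L].
  have ya : y <> a by move=> ya; move: y_m0; rewrite ya ltNge ge_min lexx.
  have yb : y <> b by move=> yb; move: y_m0; rewrite yb ltNge ge_min lexx orbT.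
  by have := farther y Sy ya yb y_L; rewrite -/m0; lra.
move=> s Ss sa sb; have [sL|Ls] := ltP (eucl_dist p s) L.
  exact: le_lt_trans dp_m0 (farther s Ss sa sb sL).
exact: lt_le_trans dpL Ls.
Qed.

Theorem lemma3p4 (R : realType) (d : nat) (hd : (2 <= d)%N)
  (m : nat) (gam : 'I_m -> R -> 'rV[R]_d)
  (hcurve : forall k, closed_curve (gam k))
  (hdisj : forall k l, k != l -> forall s t, gam k s <> gam l t)
  (C : set 'rV[R]_d) (hC : C = \bigcup_(k in [set: 'I_m]) range (gam k))
  (S : set 'rV[R]_d) (hSfin : finite_set S) (hSC : S `<=` C)
  (eps : R) (heps0 : 0 < eps) (heps1 : eps <= 1) (hsample : eps_sample C S eps)
  (k : 'I_m) (ta tb : R) (a b : 'rV[R]_d)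
  (ha : a = gam k ta) (hb : b = gam k tb) (haS : S a) (hbS : S b)
  (htab : ta < tb <= ta + 1)
  (hnext : forall t, ta < t < tb -> ~ S (gam k t))
  (t : R) (ht : ta < t < tb) (p : 'rV[R]_d) (hp : p = gam k t) :
  dist_to p S = Num.min (eucl_dist p a) (eucl_dist p b) /\
  (forall s, S s -> s <> a -> s <> b -> dist_to p S < eucl_dist p s).
Proof.
case/andP: htab => tab tba.
set A := arc (gam k) ta tb; set D := arc_complement gam k ta tb.
have hCAD : C = A `|` D by rewrite hC (curves_split hcurve k ta tb).
have hA : has_closest A by apply: arc_has_closest (hcurve k).1 (ltW tab).
have hD : has_closest D by exact: arc_complement_has_closest.
have hAD : forall z, A z -> D z -> z = a \/ z = b by rewrite ha hb; exact: arcs_meet.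
have Ap : A p by rewrite hp; exists t => //=; rewrite in_itv /= !ltW //; case/andP: ht.
have nDp : ~ D p by move=> /(hAD p Ap) [] pE; apply: (hnext t ht); rewrite -hp pE.
have Ds s : S s -> s <> a -> s <> b -> D s.
  move=> Ss sa sb; move: (hSC s Ss); rewrite hCAD => -[As|//].
  by case: (arc_endpoints hnext Ss As); rewrite -?ha -?hb.
have Cp : C p by rewrite hCAD; left.
have [L [dpL lfsL]] := sample_radius (ex_intro _ a haS) heps0 heps1 hsample Cp.
apply: (nearest_of_two haS hbS dpL) => s Ss sa sb sL.
exact: (separation hCAD hA hD hAD Ap nDp (Ds s Ss sa sb) sa sb (lfsL _ sL)).
Qed.
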